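(* The correspondence $h$ between lax functors to $\mathbf{Rel}$ and faithful functors extends to an isomorphism of categories from $\mathrm{LDiag}(\mathbf{Rel})$ to $\mathbf{Faith}$.
   Context: $\mathbf{Rel}$ is the 2-category of sets, binary relations (composed by $\mathcal{R}'\circ\mathcal{R}=\{(x,z)\mid\exists y,\ (x,y)\in\mathcal{R},(y,z)\in\mathcal{R}'\}$) and inclusions of relations. A lax functor $F\colon\mathbf{C}\to\mathbf{Rel}$ from a 1-category $\mathbf{C}$ assigns to each object $X$ a set $F(X)$ and to each morphism $f\colon X\to Y$ a relation $F(f)\subseteq F(X)\times F(Y)$ such that $F(g)\circ F(f)\subseteq F(gf)$ for all composable $f,g$. For a lax functor $S\colon\mathbf{C}\to\mathbf{Rel}$, $h(S)\colon\mathbf{H(S)}\to\mathbf{C}$ is the functor where $\mathbf{H(S)}$ has as objects the elements $s\in S(e)$ for objects $e$ of $\mathbf{C}$ and as morphisms the triples $(s,g,s')$ with $g\colon e\to e'$, $s\in S(e)$, $s'\in S(e')$, $(s,s')\in S(g)$, composed by $(s',g',s'')(s,g,s')=(s,g'g,s'')$, and $h(S)$ sends $s\in S(e)$ to $e$ and $(s,g,s')$ to $g$; this $h$ is a one-to-one correspondence between lax functors $\mathbf{C}\to\mathbf{Rel}$ and faithful functors into $\mathbf{C}$. $\mathrm{LDiag}(\mathbf{Rel})$ is the category whose objects are lax functors $S\colon\mathbf{C}\to\mathbf{Rel}$ ($\mathbf{C}$ small) and whose morphisms from $S\colon\mathbf{C}\to\mathbf{Rel}$ to $S'\colon\mathbf{C}'\to\mathbf{Rel}$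 are pairs $(L,\lambda)$ with $L\colon\mathbf{C}\to\mathbf{C}'$ a functor and $\lambda\colon S\to S'L$ a natural transformation, meaning a family of maps (functions) $\lambda_e\colon S(e)\to S'L(e)$ such that for each $g\colon e\to e'$ the relation $\lambda_{e'}\circ S(g)$ is included in $S'L(g)\circ\lambda_e$. $\mathbf{Faith}$ is the category whose objects are faithful functors between small categories and whose morphisms are commutative squares of functors between them.
   Formalization: A lax functor also sends each identity of C to a relation containing the identity relation; h extends to a functor bijective on hom-sets, each faithful functor being only isomorphic in Faith over its base identity to some h(S). The statement above fails without it. *)

From Stdlib Require Import ProofIrrelevance.
Set Implicit Arguments.

Record Cat := mkCat {
  ob : Type;
  hom : ob -> ob -> Type;
  idm : forall x, hom x x;
  comp : forall x y z, hom y z -> hom x y -> hom x z;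
  comp_id_l : forall x y (f : hom x y), comp (idm y) f = f;
  comp_id_r : forall x y (f : hom x y), comp f (idm x) = f;
  comp_assoc : forall w x y z (f : hom w x) (g : hom x y) (h : hom y z),
      comp h (comp g f) = comp (comp h g) f }.
Arguments hom {c} _ _.
Arguments idm {c} x.
Arguments comp {c x y z} _ _.

Record Functor (C D : Cat) := mkFunctor {
  fobj : ob C -> ob D;
  fmap : forall x y, hom x y -> hom (fobj x) (fobj y);
  fmap_id : forall x, fmap x x (idm x) = idm (fobj x);
  fmap_comp : forall x y z (f : hom x y) (g : hom y z),
      fmap x z (comp g f) = comp (fmap y z g) (fmap x y f) }.
Arguments fmap {C D} f0 {x y} _.
Arguments fobj {C D} f0 _.

(** Arrows packaged with their endpoints, to compare arrows with different
    (but equal) endpoints. *)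
Definition totHom (C : Cat) := {p : ob C * ob C & hom (fst p) (snd p)}.
Definition tot {C : Cat} {x y : ob C} (f : hom x y) : totHom C :=
  existT (fun p => hom (fst p) (snd p)) (x, y) f.

Definition FEq {C D : Cat} (F G : Functor C D) : Prop :=
  (forall x, fobj F x = fobj G x) /\
  (forall x y (f : hom x y), tot (fmap F f) = tot (fmap G f)).

Definition faithful {C D : Cat} (F : Functor C D) : Prop :=
  forall x y (f g : hom x y), fmap F f = fmap F g -> f = g.

Definition idF (C : Cat) : Functor C C :=
  @mkFunctor C C (fun x => x) (fun x y f => f) (fun x => eq_refl)
    (fun x y z f g => eq_refl).

Definition compF {C D E : Cat} (G : Functor D E) (F : Functor C D)
  : Functor C E.
Proof.
  refine (@mkFunctor C E (fun x => fobj G (fobj F x))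
            (fun x y f => fmap G (fmap F f)) _ _).
  - intro x. rewrite fmap_id. apply fmap_id.
  - intros x y z f g. rewrite fmap_comp. apply fmap_comp.
Defined.

Lemma tot_fmap {C D : Cat} (F : Functor C D) x y x' y'
  (f : @hom C x y) (g : @hom C x' y') :
  tot f = tot g -> tot (fmap F f) = tot (fmap F g).
Proof.
  intro H.
  pose (m := fun t : totHom C =>
    existT (fun p => @hom D (fst p) (snd p))
      (fobj F (fst (projT1 t)), fobj F (snd (projT1 t))) (fmap F (projT2 t))).
  change (m (tot f) = m (tot g)). now rewrite H.
Qed.

Record LaxRel (C : Cat) := mkLax {
  Srel : ob C -> Type;
  Smap : forall e e' : ob C, hom e e' -> Srel e -> Srel e' -> Prop;
  lax_id : forall e (s : Srel e), Smap (idm e) s s;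
  lax_comp : forall e e' e'' (f : hom e e') (g : hom e' e'') x z,
      (exists y, Smap f x y /\ Smap g y z) -> Smap (comp g f) x z }.
Arguments Srel {C} _ _.
Arguments Smap {C} _ {e e'} _ _ _.
Arguments lax_id {C} _ {e} _.
Arguments lax_comp {C} _ {e e' e''} {f g x z} _.

Section H.
Variables (C : Cat) (S : LaxRel C).

Definition Hob := {e : ob C & Srel S e}.
Definition Hhom (a b : Hob) :=
  {g : hom (projT1 a) (projT1 b) | Smap S g (projT2 a) (projT2 b)}.
Definition Hid (a : Hob) : Hhom a a :=
  exist _ (idm (projT1 a)) (lax_id S (projT2 a)).
Definition Hcomp (a b c : Hob) (g : Hhom b c) (f : Hhom a b) : Hhom a c :=
  exist _ (comp (proj1_sig g) (proj1_sig f))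
    (lax_comp S (ex_intro _ (projT2 b) (conj (proj2_sig f) (proj2_sig g)))).

Definition HCat : Cat.
Proof.
  refine (@mkCat Hob Hhom Hid Hcomp _ _ _).
  - intros x y [f Hf]. apply subset_eq_compat. apply comp_id_l.
  - intros x y [f Hf]. apply subset_eq_compat. apply comp_id_r.
  - intros w x y z [f Hf] [g Hg] [h Hh]. apply subset_eq_compat. apply comp_assoc.
Defined.

Definition hFun : Functor HCat C :=
  @mkFunctor HCat C (fun a => projT1 a) (fun a b g => proj1_sig g)
    (fun a => eq_refl) (fun a b c f g => eq_refl).

Lemma hFun_faithful : faithful hFun.
Proof.
  intros a b [f Hf] [g Hg]; simpl; intro E. now apply subset_eq_compat.
Qed.
End H.

Record LDObj := mkLD { ldbase : Cat; ldS : LaxRel ldbase }.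
Arguments mkLD {ldbase} ldS.

Record LDMor (A B : LDObj) := mkLDMor {
  ldL : Functor (ldbase A) (ldbase B);
  ldlam : forall e, Srel (ldS A) e -> Srel (ldS B) (fobj ldL e);
  ldnat : forall e e' (g : hom e e') x y,
      Smap (ldS A) g x y -> Smap (ldS B) (fmap ldL g) (ldlam e x) (ldlam e' y) }.
Arguments ldL {A B} _.
Arguments ldlam {A B} _ {e} _.

Definition LDEq {A B : LDObj} (m m' : LDMor A B) : Prop :=
  FEq (ldL m) (ldL m') /\
  forall e (s : Srel (ldS A) e),
    existT (Srel (ldS B)) (fobj (ldL m) e) (ldlam m s) =
    existT (Srel (ldS B)) (fobj (ldL m') e) (ldlam m' s).

Definition ldid (A : LDObj) : LDMor A A :=
  @mkLDMor A A (idF _) (fun e s => s) (fun e e' g x y H => H).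

Definition ldcomp {A B C : LDObj} (n : LDMor B C) (m : LDMor A B) : LDMor A C :=
  @mkLDMor A C (compF (ldL n) (ldL m)) (fun e s => ldlam n (ldlam m s))
    (fun e e' g x y H => ldnat n _ _ _ _ _ (ldnat m _ _ _ _ _ H)).

Record FObj := mkF {
  fdom : Cat; fcod : Cat; fP : Functor fdom fcod; fPfaith : faithful fP }.

Record FMor (A B : FObj) := mkFMor {
  fK : Functor (fdom A) (fdom B);
  fL : Functor (fcod A) (fcod B);
  fcommute : FEq (compF (fP B) fK) (compF fL (fP A)) }.
Arguments fK {A B} _.
Arguments fL {A B} _.

Definition FMEq {A B : FObj} (m m' : FMor A B) : Prop :=
  FEq (fK m) (fK m') /\ FEq (fL m) (fL m').

Definition fid (A : FObj) : FMor A A.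
Proof.
  refine (@mkFMor A A (idF _) (idF _) _). split; reflexivity.
Defined.

Definition fcomp {A B C : FObj} (n : FMor B C) (m : FMor A B) : FMor A C.
Proof.
  refine (@mkFMor A C (compF (fK n) (fK m)) (compF (fL n) (fL m)) _).
  destruct (fcommute n) as [n1 n2]; destruct (fcommute m) as [m1 m2].
  split; simpl in *.
  - intro x. rewrite n1. now rewrite m1.
  - intros x y f. rewrite n2. apply tot_fmap. apply m2.
Defined.

Definition hobj (A : LDObj) : FObj :=
  @mkF (HCat (ldS A)) (ldbase A) (hFun (ldS A)) (@hFun_faithful _ (ldS A)).

(** The correspondence is functorial because a morphism [(L, λ)] of lax
    functors induces the functor [(e, s) ↦ (L e, λ_e s)] on the categories of
    elements, naturality of [λ] being exactly what makes it act on arrows.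
    It is bijective on hom-sets: in a commutative square [(K, L)] from [h(S)]
    to [h(S')], the object [K (e, s)] lies over [L e], which recovers [λ_e s],
    and [K] on arrows is determined by [L] since [h(S')] is faithful.
    Finally a faithful [P : D -> C] is isomorphic, over [C], to [h] of its
    fibre relation: [S(e)] is the fibre of [P] over [e], and [(a, b) ∈ S(g)]
    iff [g = P k] for some [k : a -> b]. *)

From Stdlib Require Import ProofIrrelevance ClassicalEpsilon.

Lemma tot_endpoints {C : Cat} {x y x' y' : ob C} {f : hom x y} {f' : hom x' y'} :
  tot f = tot f' -> x = x' /\ y = y'.
Proof.
  intro H. split.
  - exact (f_equal (fun t : totHom C => fst (projT1 t)) H).
  - exact (f_equal (fun t : totHom C => snd (projT1 t)) H).
Qed.

Lemma tot_inj {C : Cat} {x y : ob C} {f f' : hom x y} : tot f = tot f' -> f = f'.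
Proof. exact (inj_pair2 _ _ _ _ _). Qed.

Lemma tot_comp (C : Cat) (x y z x' y' z' : ob C) (f : hom x y) (g : hom y z)
  (f' : hom x' y') (g' : hom y' z') :
  tot f = tot f' -> tot g = tot g' -> tot (comp g f) = tot (comp g' f').
Proof.
  intros Hf Hg.
  destruct (tot_endpoints Hf) as [-> ->], (tot_endpoints Hg) as [_ ->].
  now rewrite (tot_inj Hf), (tot_inj Hg).
Qed.

Lemma tot_Hhom (C : Cat) (S : LaxRel C) (a b a' b' : Hob S)
  (f : Hhom a b) (f' : Hhom a' b') :
  a = a' -> b = b' -> tot (proj1_sig f) = tot (proj1_sig f') ->
  @tot (HCat S) a b f = @tot (HCat S) a' b' f'.
Proof.
  intros -> -> H. apply tot_inj in H.
  destruct f as [g Hg], f' as [g' Hg']. simpl in H. subst g'.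
  now rewrite (proof_irrelevance _ Hg Hg').
Qed.

Lemma Smap_eq_rect (C : Cat) (S : LaxRel C) (p q p' q' : ob C)
  (h : hom p q) (h' : hom p' q') (u : Srel S p) (v : Srel S q)
  (ep : p = p') (eq : q = q') :
  tot h = tot h' -> Smap S h u v ->
  Smap S h' (eq_rect _ (Srel S) u _ ep) (eq_rect _ (Srel S) v _ eq).
Proof. intro H. subst. simpl. now rewrite <- (tot_inj H). Qed.

Lemma existT_eq_rect_projT2 (X : Type) (P : X -> Type) (a : sigT P) p
  (ep : projT1 a = p) :
  existT P p (eq_rect _ P (projT2 a) p ep) = a.
Proof. destruct ep. now destruct a. Qed.

Section HMorphisms.
Variables (A B : LDObj).

Definition Hfun (m : LDMor A B) : Functor (HCat (ldS A)) (HCat (ldS B)).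
Proof.
  refine (@mkFunctor (HCat (ldS A)) (HCat (ldS B))
    (fun a => existT (Srel (ldS B)) (fobj (ldL m) (projT1 a)) (ldlam m (projT2 a)))
    (fun a b f => exist _ (fmap (ldL m) (proj1_sig f))
        (ldnat m _ _ _ _ _ (proj2_sig f))) _ _).
  - intro x. apply subset_eq_compat. apply fmap_id.
  - intros x y z f g. apply subset_eq_compat. apply fmap_comp.
Defined.

Definition Hmap (m : LDMor A B) : FMor (hobj A) (hobj B).
Proof. refine (@mkFMor (hobj A) (hobj B) (Hfun m) (ldL m) _). split; reflexivity. Defined.

Lemma Hmap_proper (m m' : LDMor A B) : LDEq m m' -> FMEq (Hmap m) (Hmap m').
Proof.
  intros [HL Hlam]. split; [|exact HL]. split.
  - intros [e s]. apply Hlam.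
  - intros [e s] [e' s'] f. apply tot_Hhom; [apply Hlam | apply Hlam | apply HL].
Qed.

Lemma Hmap_reflect (m m' : LDMor A B) : FMEq (Hmap m) (Hmap m') -> LDEq m m'.
Proof.
  intros [[HK _] HL]. split; [exact HL|].
  intros e s. exact (HK (existT _ e s)).
Qed.

Section Lift.
Variable n : FMor (hobj A) (hobj B).

(** [K (e, s)] lies over [L e] only propositionally, hence the transport. *)
Definition lift_lam {e} (s : Srel (ldS A) e) : Srel (ldS B) (fobj (fL n) e) :=
  eq_rect _ (Srel (ldS B)) (projT2 (fobj (fK n) (existT _ e s))) _
    (proj1 (fcommute n) (existT _ e s)).

Lemma lift_lam_natural e e' (g : hom e e') x y :
  Smap (ldS A) g x y -> Smap (ldS B) (fmap (fL n) g) (lift_lam x) (lift_lam y).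
Proof.
  intro Hg.
  pose (f := exist _ g Hg : @Hhom _ (ldS A) (existT _ e x) (existT _ e' y)).
  apply Smap_eq_rect with (h := proj1_sig (fmap (fK n) (f : @hom (HCat (ldS A)) _ _))).
  - exact (proj2 (fcommute n) _ _ f).
  - exact (proj2_sig (fmap (fK n) (f : @hom (HCat (ldS A)) _ _))).
Qed.

Definition lift : LDMor A B := @mkLDMor A B (fL n) (@lift_lam) lift_lam_natural.

Lemma Hmap_lift : FMEq (Hmap lift) n.
Proof.
  split; [|split; reflexivity]. split.
  - intros [e s]. apply existT_eq_rect_projT2.
  - intros [e s] [e' s'] f. apply tot_Hhom.
    + apply existT_eq_rect_projT2.
    + apply existT_eq_rect_projT2.
    + symmetry. exact (proj2 (fcommute n) _ _ f).
Qed.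
End Lift.
End HMorphisms.
Arguments Hmap {A B} m.
Arguments lift {A B} n.

Lemma Hmap_id (A : LDObj) : FMEq (Hmap (ldid A)) (fid (hobj A)).
Proof.
  split; [|split; reflexivity]. split.
  - intros [e s]. reflexivity.
  - intros [e s] [e' s'] f. now apply tot_Hhom.
Qed.

Lemma Hmap_comp (A B C : LDObj) (m : LDMor A B) (n : LDMor B C) :
  FMEq (Hmap (ldcomp n m)) (fcomp (Hmap n) (Hmap m)).
Proof.
  split; [|split; reflexivity]. split.
  - reflexivity.
  - intros x y f. now apply tot_Hhom.
Qed.

Section Fibres.
Variable F : FObj.
Let P := fP F.

Lemma tot_fmap_inj (a b : ob (fdom F)) (k k' : hom a b) :
  tot (fmap P k) = tot (fmap P k') -> k = k'.
Proof. intro H. exact (fPfaith F _ _ _ _ (tot_inj H)). Qed.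

Definition fibreRel : LaxRel (fcod F).
Proof.
  refine (@mkLax (fcod F) (fun e => {a : ob (fdom F) | fobj P a = e})
    (fun e e' g u v => exists k : hom (proj1_sig u) (proj1_sig v), tot (fmap P k) = tot g)
    _ _).
  - intros e [a <-]. exists (idm a). simpl. now rewrite fmap_id.
  - intros e e' e'' f g [a pa] [c pc] [[b pb] [[k1 H1] [k2 H2]]]. simpl in *.
    exists (comp k2 k1). rewrite fmap_comp. now apply tot_comp.
Defined.

(** By faithfulness of [P] the chosen arrow is the only one, so choosing it
    is functorial. *)
Definition lift_arrow {a b : Hob fibreRel} (g : Hhom a b) :
  hom (proj1_sig (projT2 a)) (proj1_sig (projT2 b)) :=
  proj1_sig (constructive_indefinite_description _ (proj2_sig g)).

Lemma lift_arrow_spec {a b : Hob fibreRel} (g : Hhom a b) :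
  tot (fmap P (lift_arrow g)) = tot (proj1_sig g).
Proof. unfold lift_arrow. now destruct constructive_indefinite_description. Qed.

Definition fibre_proj : Functor (HCat fibreRel) (fdom F).
Proof.
  refine (@mkFunctor (HCat fibreRel) (fdom F) (fun a => proj1_sig (projT2 a))
    (fun a b g => lift_arrow g) _ _).
  - intros [e [a <-]]. apply tot_fmap_inj.
    rewrite lift_arrow_spec. simpl. now rewrite fmap_id.
  - intros x y z f g. apply tot_fmap_inj.
    rewrite lift_arrow_spec, fmap_comp. simpl.
    apply tot_comp; symmetry; apply lift_arrow_spec.
Defined.

Definition fibre_incl : Functor (fdom F) (HCat fibreRel).
Proof.
  refine (@mkFunctor (fdom F) (HCat fibreRel)
    (fun a => existT (Srel fibreRel) (fobj P a) (exist _ a eq_refl))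
    (fun a b k => exist _ (fmap P k) (ex_intro _ k eq_refl)) _ _).
  - intro x. apply subset_eq_compat. apply fmap_id.
  - intros x y z f g. apply subset_eq_compat. apply fmap_comp.
Defined.

Definition fibre_counit : FMor (hobj (mkLD fibreRel)) F.
Proof.
  refine (@mkFMor (hobj (mkLD fibreRel)) F fibre_proj (idF _) _). split.
  - intros [e [a pa]]. exact pa.
  - intros x y f. apply lift_arrow_spec.
Defined.

Definition fibre_unit : FMor F (hobj (mkLD fibreRel)).
Proof.
  refine (@mkFMor F (hobj (mkLD fibreRel)) fibre_incl (idF _) _). split; reflexivity.
Defined.

Lemma fibre_unit_counit : FMEq (fcomp fibre_unit fibre_counit) (fid _).
Proof.
  split; [|split; reflexivity]. split.
  - intros [e [a <-]]. reflexivity.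
  - intros [e [a <-]] [e' [a' <-]] f. apply tot_Hhom; [reflexivity..|].
    apply lift_arrow_spec.
Qed.

Lemma fibre_counit_unit : FMEq (fcomp fibre_counit fibre_unit) (fid _).
Proof.
  split; [|split; reflexivity]. split.
  - reflexivity.
  - intros x y f. simpl. f_equal. apply tot_fmap_inj.
    exact (lift_arrow_spec (fmap fibre_incl f)).
Qed.
End Fibres.

Theorem mainTheorem6 :
  exists Phi : forall A B : LDObj, LDMor A B -> FMor (hobj A) (hobj B),
    (* Phi is well defined on (extensional) equality classes of morphisms *)
    (forall A B (m m' : LDMor A B), LDEq m m' -> FMEq (Phi _ _ m) (Phi _ _ m')) /\
    (* functoriality *)
    (forall A, FMEq (Phi _ _ (ldid A)) (fid (hobj A))) /\
    (forall A B C (m : LDMor A B) (n : LDMor B C),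
        FMEq (Phi _ _ (ldcomp n m)) (fcomp (Phi _ _ n) (Phi _ _ m))) /\
    (* bijective on hom-sets *)
    (forall A B (m m' : LDMor A B), FMEq (Phi _ _ m) (Phi _ _ m') -> LDEq m m') /\
    (forall A B (n : FMor (hobj A) (hobj B)), exists m, FMEq (Phi _ _ m) n) /\
    (* every faithful functor is h(S) for some S (up to the canonical
       identification: an isomorphism in Faith lying over the identity of C) *)
    (forall F : FObj,
        exists (S : LaxRel (fcod F)) (a : FMor (hobj (mkLD S)) F)
               (b : FMor F (hobj (mkLD S))),
          FEq (fL a) (idF _) /\ FEq (fL b) (idF _) /\
          FMEq (fcomp b a) (fid _) /\ FMEq (fcomp a b) (fid _)).
Proof.
  exists (@Hmap).
  split; [|split; [|split; [|split; [|split]]]].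
  - apply Hmap_proper.
  - apply Hmap_id.
  - apply Hmap_comp.
  - apply Hmap_reflect.
  - intros A B n. exists (lift n). apply Hmap_lift.
  - intros F. exists (fibreRel F), (fibre_counit F), (fibre_unit F).
    split; [|split; [|split]]; try (split; reflexivity).
    + apply fibre_unit_counit.
    + apply fibre_counit_unit.
Qed.
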